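(* Let $m\ge2$ be even, $n\ge2$, and let $\mathcal{A}$ be a positive semi-definite Hankel tensor of order $m$ and dimension $n$ with Vandermonde decomposition $\mathcal{A}=\sum_{k=1}^r\alpha_k u_k^m$, where $\alpha_k\in\mathbb{R}\setminus\{0\}$ and $u_k=(1,\mu_k,\dots,\mu_k^{n-1})^T$ with pairwise distinct real $\mu_k$. Then: (i) $\alpha_1+\alpha_2+\cdots+\alpha_r\ge0$; (ii) if $r>n$, then the number of indices $k$ with $\alpha_k>0$ is at least $n$; (iii) if $r\le n$, then $\alpha_k>0$ for all $k\in\{1,\dots,r\}$.
   Context: A Hankel tensor of order $m$ and dimension $n$ has entries $a_{i_1\cdots i_m}=v_{i_1+\cdots+i_m-m}$ for some vector $v=(v_0,\dots,v_{(n-1)m})$. For $u\in\mathbb{R}^n$, $u^m$ denotes the rank-one tensor with entries $u_{i_1}\cdots u_{i_m}$. $\mathcal{A}$ is positive semi-definite if $\mathcal{A}x^m=\sum a_{i_1\cdots i_m}x_{i_1}\cdots x_{i_m}\ge0$ for all $x\in\mathbb{R}^n$. *)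

From HB Require Import structures.
From mathcomp Require Import all_boot all_order all_algebra.
Set Implicit Arguments. Unset Strict Implicit. Unset Printing Implicit Defensive.
Import Order.TTheory GRing.Theory Num.Theory.
Local Open Scope ring_scope.

(* A real tensor of order m and dimension n: entries indexed by
   multi-indices (i_1,...,i_m), i.e. functions 'I_m -> 'I_n (0-based). *)
Definition tensor (R : Type) (m n : nat) := {ffun 'I_m -> 'I_n} -> R.

Definition hankel_tensor (R : Type) (m n : nat) (v : nat -> R) : tensor R m n :=
  fun idx => v (\sum_(j < m) (idx j : nat))%N.

Definition rank1_pow (R : comNzRingType) (m n : nat) (u : 'I_n -> R) : tensor R m n :=
  fun idx => \prod_(j < m) u (idx j).

Definition vandermonde_vec (R : comNzRingType) (n : nat) (mu : R) : 'I_n -> R :=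
  fun i => mu ^+ i.

Definition tensor_form (R : comNzRingType) (m n : nat) (A : tensor R m n)
  (x : 'I_n -> R) : R :=
  \sum_(idx : {ffun 'I_m -> 'I_n}) A idx * \prod_(j < m) x (idx j).

Definition tensor_psd (R : realFieldType) (m n : nat) (A : tensor R m n) : Prop :=
  forall x : 'I_n -> R, 0 <= tensor_form A x.

(* Expanding the form gives A x^m = sum_k alpha_k p(mu_k)^m, where p is the
   polynomial with coefficient vector x, so deg p < n is arbitrary.  Taking
   p = 1 gives (i).  If some alpha_k0 < 0 and fewer than n weights were
   positive, the polynomial vanishing exactly at the mu_j with alpha_j > 0
   has degree < n and makes the form negative: hence at least n weights are
   positive, which yields (ii), and (iii) because alpha_k0 itself is not
   among them when r <= n. *)

From HB Require Import structures.
From mathcomp Require Import all_boot all_order all_algebra.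
Set Implicit Arguments. Unset Strict Implicit. Unset Printing Implicit Defensive.
Import Order.TTheory GRing.Theory Num.Theory.
Local Open Scope ring_scope.

Section VandermondeForm.

Variables (R : comNzRingType) (m n r : nat) (alpha mu : 'I_r -> R).
Variable A : tensor R m n.
Hypothesis A_decomp : forall idx, A idx =
  \sum_(k < r) alpha k * @rank1_pow R m n (@vandermonde_vec R n (mu k)) idx.

Lemma tensor_form_vandermonde (x : 'I_n -> R) :
  tensor_form A x = \sum_(k < r) alpha k * (\sum_(i < n) mu k ^+ i * x i) ^+ m.
Proof.
rewrite /tensor_form.
under eq_bigr => idx _ do rewrite A_decomp big_distrl /=.
rewrite exchange_big; apply: eq_bigr => k _.
rewrite -[m in _ ^+ m]card_ord -prodr_const bigA_distr_bigA big_distrr /=.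
apply: eq_bigr => idx _.
by rewrite /rank1_pow /vandermonde_vec -mulrA -big_split.
Qed.

Lemma tensor_form_poly_coef (p : {poly R}) : (size p <= n)%N ->
  tensor_form A (fun i => p`_i) = \sum_(k < r) alpha k * p.[mu k] ^+ m.
Proof.
move=> size_p; rewrite tensor_form_vandermonde.
apply: eq_bigr => k _; rewrite (horner_coef_wide _ size_p).
by under [in RHS]eq_bigr => i _ do rewrite mulrC.
Qed.

End VandermondeForm.

Section PsdVandermonde.

Variables (R : realFieldType) (m n r : nat) (alpha mu : 'I_r -> R).
Variable A : tensor R m n.
Hypotheses (m_even : ~~ odd m) (m_gt0 : (0 < m)%N).
Hypothesis mu_inj : injective mu.
Hypothesis A_psd : tensor_psd A.
Hypothesis A_decomp : forall idx, A idx =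
  \sum_(k < r) alpha k * @rank1_pow R m n (@vandermonde_vec R n (mu k)) idx.

Lemma weighted_horner_pow_ge0 (p : {poly R}) : (size p <= n)%N ->
  0 <= \sum_(k < r) alpha k * p.[mu k] ^+ m.
Proof.
by move=> size_p; rewrite -(tensor_form_poly_coef A_decomp size_p).
Qed.

Lemma sum_weights_ge0 : (0 < n)%N -> 0 <= \sum_(k < r) alpha k.
Proof.
move=> n_gt0; have := @weighted_horner_pow_ge0 1.
by rewrite size_poly1; under eq_bigr => k _ do rewrite hornerC expr1n mulr1; apply.
Qed.

Lemma card_pos_weights_ge (k0 : 'I_r) : alpha k0 < 0 ->
  (n <= #|[set k | (0 < alpha k)%R]|)%N.
Proof.
move=> alpha_k0_lt0; set S := [set k | (0 < alpha k)%R].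
rewrite leqNgt; apply/negP => card_S_lt.
pose p : {poly R} := \prod_(z <- map mu (enum S)) ('X - z%:P).
have root_p k : root p (mu k) = (k \in S).
  by rewrite root_prod_XsubC (mem_map mu_inj) mem_enum.
have size_p : (size p <= n)%N by rewrite size_prod_XsubC size_map -cardE.
have k0S : k0 \notin S by rewrite inE -leNgt ltW.
have term_k0_lt0 : alpha k0 * p.[mu k0] ^+ m < 0.
  by rewrite pmulr_llt0 // exprn_even_gt0 // -/(root p _) root_p k0S orbT.
have other_terms_le0 : \sum_(k < r | k != k0) alpha k * p.[mu k] ^+ m <= 0.
  apply: sumr_le0 => k _; have [kS | kNS] := boolP (k \in S).
    by move: kS; rewrite -root_p => /rootP ->; rewrite expr0n eqn0Ngt m_gt0 mulr0.
  by rewrite mulr_le0_ge0 ?exprn_even_ge0 // leNgt; rewrite inE in kNS.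
have := ltr_leD term_k0_lt0 other_terms_le0; rewrite addr0 => sum_lt0.
by have := weighted_horner_pow_ge0 size_p; rewrite (bigD1 k0) //= leNgt sum_lt0.
Qed.

End PsdVandermonde.

Theorem proposition4p1 (R : realFieldType) (m n : nat)
  (Hm_even : ~~ odd m) (Hm : (2 <= m)%N) (Hn : (2 <= n)%N)
  (A : tensor R m n) (v : nat -> R)
  (HA_hankel : A = @hankel_tensor R m n v)
  (HA_psd : tensor_psd A)
  (r : nat) (alpha mu : 'I_r -> R)
  (Halpha : forall k, alpha k != 0)
  (Hmu : injective mu)
  (Hdecomp : forall idx, A idx =
     \sum_(k < r) alpha k * @rank1_pow R m n (@vandermonde_vec R n (mu k)) idx) :
  0 <= \sum_(k < r) alpha k /\
  ((n < r)%N -> (n <= #|[set k | (0 < alpha k)%R]|)%N) /\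
  ((r <= n)%N -> forall k, 0 < alpha k).
Proof.
have m_gt0 : (0 < m)%N by apply: ltnW.
have card_pos := card_pos_weights_ge Hm_even m_gt0 Hmu HA_psd Hdecomp.
have neg_of_not_pos k : ~~ (0 < alpha k) -> alpha k < 0.
  by rewrite -leNgt lt_neqAle Halpha.
split; first exact: (sum_weights_ge0 HA_psd Hdecomp (ltnW Hn)).
split.
  move=> n_lt_r; have [k k_nonpos | all_pos] := pickP (fun k => ~~ (0 < alpha k)).
    exact: card_pos k (neg_of_not_pos k k_nonpos).
  have -> : [set k | (0 < alpha k)%R] = setT.
    by apply/setP => k; rewrite !inE; apply/negbFE/all_pos.
  by rewrite cardsT card_ord ltnW.
move=> r_le_n k; apply/contraT => k_nonpos.
have card_ge := card_pos k (neg_of_not_pos k k_nonpos).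
suff : (#|[set k | (0 < alpha k)%R]| < r)%N by rewrite ltnNge (leq_trans r_le_n card_ge).
rewrite -[r in (_ < r)%N]card_ord -cardsT; apply/proper_card/properP.
by split; [exact: subsetT | exists k; rewrite ?inE].
Qed.
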